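(* Let $M$ be a unicyclic partial multiplication matrix. There is a bound $B$, depending only on $M$, such that for every $M$-coil $\pi$ and every $M$-gridding $\pi^\#$ of $\pi$, the gridded permutation $\pi^\#$ has at most $B$ misplaced points.
   Context: A gridding matrix has entries in $\{0,1,-1\}$; an $m\times n$ one has $m$ columns, $n$ rows, $M_{ij}$ in column $i$ from the left and row $j$ from the bottom. An $M$-gridding of a permutation $\pi$ of length $L$ is a choice of vertical lines $\tfrac12=v_0\le\dots\le v_m=L+\tfrac12$ and horizontal lines $\tfrac12=h_0\le\dots\le h_n=L+\tfrac12$, not through points of $\pi$, such that in each cell $C_{ij}=\{v_{i-1}<x<v_i,\ h_{j-1}<y<h_j\}$ the points of $\pi$ are absent if $M_{ij}=0$, increasing if $M_{ij}=1$, decreasing if $M_{ij}=-1$; the result is an $M$-gridded permutation. The row-column graph $G_M$ is the bipartite graph on $\{1,\dots,m\}\cup\{1',\dots,n'\}$ with edge $ij'$ iff $M_{ij}\neq0$ (cell $(i,j)$ corresponds to edge $ij'$); $M$ is unicyclic if $G_M$ has exactly one cycle. In an $M$-gridding, a point is misplaced if it lies in a cell that does not correspond to an edge of the cycle of $G_M$. $M$ is a partial multiplication matrix: there are fixed $c_1,\dots,c_m,r_1,\dots,r_n\in\{\pm1\}$ with $M_{ij}=c_ir_j$ for each non-zero entry. Column $i$ is oriented left-to-right if $c_i=1$, right-to-left otherwise; row $j$ bottom-to-top if $r_j=1$, top-to-bottom otherwise. The orientation digraph of an $M$-gridded permutation has its points as vertices with $x\to y$ whenever $x,y$ lie in a common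 column of cells and $x$ precedes $y$ in that column's orientation, or in a common row of cells and $x$ precedes $y$ in that row's orientation. Let $\ell$ be the length of the cycle of $G_M$. A gridded $M$-coil is an $M$-gridded permutation of length $n>\ell$ with an ordering $v_1,\dots,v_n$ of its points and a labelling by $1,\dots,\ell$ of the cells corresponding to the edges of the cycle such that (C1) $v_i$ lies in cell $i\bmod\ell$ (residues in $\{1,\dots,\ell\}$); (C2) $v_{i-1}\to v_i$ for $1<i\le n$; (C3) $v_i\to v_{i-\ell-1}$ for $\ell+1<i\le n$; (C4) $v_{\ell+1}\to v_1$. An $M$-coil is a permutation having some $M$-gridding which is a gridded $M$-coil. *)

From mathcomp Require Import all_boot all_order all_algebra fingroup perm.
Set Implicit Arguments. Unset Strict Implicit. Unset Printing Implicit Defensive.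
Import GRing.Theory.

(* Conventions:
   - A gridding matrix with m columns and n rows is M : 'M[int]_(m, n),
     where M i j is the entry in column i (0-based, from the left) and
     row j (0-based, from the bottom).
   - A permutation of length L is pi : 'S_L; its points are (x, pi x) for
     x : 'I_L (0-based coordinates; the paper's point is (x+1, pi x + 1)).
   - A vertical grid line at the half-integer V + 1/2 is represented by the
     natural number V (similarly for horizontal lines).  v k is the line
     v_k, for k = 0..m. *)

Section Gridding.
Variables (m n L : nat).

Definition in_col (v : nat -> nat) (i : 'I_m) (x : nat) := (v i <= x < v i.+1)%N.
Definition in_row (h : nat -> nat) (j : 'I_n) (y : nat) := (h j <= y < h j.+1)%N.

Definition in_cell (pi : 'S_L) (v h : nat -> nat) (x : 'I_L) (i : 'I_m) (j : 'I_n) :=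
  in_col v i x && in_row h j (pi x).

Definition lines_ok (k : nat) (v : nat -> nat) :=
  v 0 = 0%N /\ v k = L /\ (forall t, (t < k)%N -> (v t <= v t.+1)%N).

Definition is_gridding (M : 'M[int]_(m, n)) (pi : 'S_L) (v h : nat -> nat) :=
  [/\ lines_ok m v, lines_ok n h &
    forall (i : 'I_m) (j : 'I_n),
      [/\ M i j = 0%R -> forall x, ~~ in_cell pi v h x i j,
          M i j = 1%R -> forall x y, in_cell pi v h x i j -> in_cell pi v h y i j ->
                         (x < y)%N -> (pi x < pi y)%N &
          M i j = (-1)%R -> forall x y, in_cell pi v h x i j -> in_cell pi v h y i j ->
                         (x < y)%N -> (pi y < pi x)%N]].

Definition misplaced (pi : 'S_L) (v h : nat -> nat) (C : {set 'I_m * 'I_n}) (x : 'I_L) :=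
  [exists i : 'I_m, exists j : 'I_n, in_cell pi v h x i j && ((i, j) \notin C)].

Definition num_misplaced pi v h C := #|[set x : 'I_L | misplaced pi v h C x]|.

Definition orient_arrow (c : 'I_m -> int) (r : 'I_n -> int)
   (pi : 'S_L) (v h : nat -> nat) (x y : 'I_L) :=
  [exists i : 'I_m, [&& in_col v i x, in_col v i y &
        if c i == 1%R then (x < y)%N else (y < x)%N]] ||
  [exists j : 'I_n, [&& in_row h j (pi x), in_row h j (pi y) &
        if r j == 1%R then (pi x < pi y)%N else (pi y < pi x)%N]].

End Gridding.

Definition rc_adj m n (M : 'M[int]_(m, n)) : rel ('I_m + 'I_n) :=
  fun a b => match a, b with
  | inl i, inr j => M i j != 0%R
  | inr j, inl i => M i j != 0%R
  | _, _ => false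
  end.

(* edge set (as cells) of a cycle given by its cyclic vertex sequence s *)
Definition cycle_cells m n (s : seq ('I_m + 'I_n)) : {set 'I_m * 'I_n} :=
  [set p : 'I_m * 'I_n |
     ((inl p.1 \in s) && (next s (inl p.1) == inr p.2)) ||
     ((inr p.2 \in s) && (next s (inr p.2) == inl p.1))].

Definition is_cycle_of m n (M : 'M[int]_(m, n)) (C : {set 'I_m * 'I_n}) :=
  exists s : seq ('I_m + 'I_n),
    [/\ uniq s, (2 < size s)%N, path.cycle (rc_adj M) s & C = cycle_cells s].

Definition unicyclic_with m n (M : 'M[int]_(m, n)) (C : {set 'I_m * 'I_n}) :=
  is_cycle_of M C /\ forall C', is_cycle_of M C' -> C' = C.

Definition unicyclic m n (M : 'M[int]_(m, n)) := exists C, unicyclic_with M C.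

Definition gridding_matrix m n (M : 'M[int]_(m, n)) :=
  forall i j, M i j \in [:: 0%R; 1%R; (-1)%R].

Definition pmm_signs m n (M : 'M[int]_(m, n)) (c : 'I_m -> int) (r : 'I_n -> int) :=
  [/\ forall i, c i = 1%R \/ c i = (-1)%R,
      forall j, r j = 1%R \/ r j = (-1)%R &
      forall i j, M i j != 0%R -> M i j = (c i * r j)%R].

(* gridded M-coil, where C is the set of cells of the cycle of G_M.
   0-based: the ordering is s : 'I_L -> 'I_L (v_{k+1} = s k), the cell
   labelling is e : 'I_#|C| -> cells (cell labelled t+1 is e t). *)
Definition gridded_coil m n (M : 'M[int]_(m, n)) (c : 'I_m -> int) (r : 'I_n -> int)
    (C : {set 'I_m * 'I_n}) L (pi : 'S_L) (v h : nat -> nat) :=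
  let ell := #|C| in
  [/\ is_gridding M pi v h, (ell < L)%N &
   exists (s : 'I_L -> 'I_L) (e : 'I_ell -> 'I_m * 'I_n),
     [/\ injective s, injective e & (forall t, e t \in C)] /\
     [/\
         forall (k : 'I_L) (t : 'I_ell), (t = k %% ell :> nat)%N ->
                    in_cell pi v h (s k) (e t).1 (e t).2,
        
         forall (k k' : 'I_L), k' = k.+1 :> nat -> orient_arrow c r pi v h (s k) (s k'),
         forall (k k' : 'I_L), (ell.+1 <= k)%N -> k' = (k - ell.+1)%N :> nat ->
                    orient_arrow c r pi v h (s k) (s k') &
         forall (k k' : 'I_L), k = ell :> nat -> k' = 0%N :> nat ->
                    orient_arrow c r pi v h (s k) (s k')]].

Definition coil m n (M : 'M[int]_(m, n)) c r C L (pi : 'S_L) :=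
  exists v h, gridded_coil M c r C pi v h.

From mathcomp Require Import all_boot all_order all_algebra fingroup perm.
From mathcomp Require Import zify.
Set Implicit Arguments. Unset Strict Implicit. Unset Printing Implicit Defensive.

(* Let v_1, ..., v_L be the coil ordering and l the length of the cycle of G_M.
   For i > l the arrows v_i -> v_(i+1) -> v_(i-l) run along the row or column
   shared by the consecutive cycle cells of v_i and v_(i+1), so v_(i+1) lies
   strictly between v_i and v_(i-l) in that direction; since v_i and v_(i-l)
   share a cell, the multiplication signs make v_i precede v_(i-l) in both
   orientations. Hence every residue class mod l is monotone in both
   coordinates, and a line of any other gridding separates at most one pair
   (v_i, v_(i-l)) of each class: there are at most l (m + n + 2) "breaks".
   Where no break occurs for l + 1 consecutive indices, the betweenness above
   makes the cells of the new gridding a closed non-backtracking walk of length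
   l in G_M, which must run around the unique cycle. So a misplaced point is
   near an end of the ordering or at most l places before a break. *)

Definition oriented (sg : int) (p q : nat) := if sg == 1%R then p < q else q < p.

Definition between (p q r : nat) := (p < q < r) || (r < q < p).

Lemma oriented_trans sg p q r : oriented sg p q -> oriented sg q r -> oriented sg p r.
Proof. by rewrite /oriented; case: ifP => _; lia. Qed.

Lemma oriented_between sg p q r : oriented sg p q -> oriented sg q r -> between p q r.
Proof. by rewrite /oriented /between; case: ifP => _; lia. Qed.

Lemma between_band p q r lo hi :
  between p q r -> lo <= p < hi -> lo <= r < hi -> lo <= q < hi.
Proof. rewrite /between; lia. Qed.

Lemma oriented_crosses_once (g : nat -> nat) sg V w :
  (forall k, k <= w -> oriented sg (g k.+1) (g k)) -> 0 < w ->
  (V <= g 0) != (V <= g 1) -> (V <= g w) != (V <= g w.+1) -> False.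
Proof.
move=> step w_gt0.
have chain k : 0 < k <= w -> if sg == 1%R then g k <= g 1 else g 1 <= g k.
  elim: k => [//|[|k] IH] /andP[_ kw]; first by case: ifP.
  by move: (step k.+1 (ltnW kw)) (IH (ltnW kw)); rewrite /oriented; case: ifP => _; lia.
move: (step 0 (ltnW w_gt0)) (step w (leqnn w)) (chain w); rewrite w_gt0 leqnn.
by rewrite /oriented; case: ifP => _; lia.
Qed.

Lemma oriented_class_crosses_once (f : nat -> nat) sg V l i1 i2 :
  (forall j, l <= j <= i2 -> j = i1 %[mod l] -> oriented sg (f j) (f (j - l))) ->
  l <= i1 < i2 -> i1 = i2 %[mod l] ->
  (V <= f i1) != (V <= f (i1 - l)) -> (V <= f i2) != (V <= f (i2 - l)) -> False.
Proof.
move=> step /andP[li1 lt] md cross1 cross2.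
have [w w_gt0 Ei2] : exists2 w, 0 < w & i2 = i1 + w * l.
  have /dvdnP[[|w] Ew] : l %| i2 - i1 by rewrite -eqn_mod_dvd ?(ltnW lt) // md.
    by move: lt; rewrite -subn_gt0 Ew.
  by exists w.+1 => //; lia.
have idxS k : i1 - l + k.+1 * l = i1 + k * l by rewrite mulSn; lia.
apply: (@oriented_crosses_once (fun k => f (i1 - l + k * l)) sg V w _ w_gt0) => /=.
- move=> k kw; rewrite idxS.
  have kl : k * l <= w * l by rewrite leq_mul2r kw orbT.
  have -> : i1 - l + k * l = i1 + k * l - l by lia.
  by apply: step; [lia | rewrite addnC modnMDl].
- by rewrite mul0n addn0 mul1n subnK // eq_sym.
- by rewrite idxS -Ei2 (_ : i1 - l + w * l = i2 - l) //; lia.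
Qed.

Lemma card_ord_range L a b : #|[set k : 'I_L | a <= k < b]| <= b - a.
Proof.
rewrite cardE -(size_map val) -(size_iota a (b - a)).
apply: uniq_leq_size; first by rewrite (map_inj_uniq val_inj) enum_uniq.
move=> x /mapP[k]; rewrite mem_enum inE mem_iota => kab -> /=; lia.
Qed.

(** * Griddings *)

Section Lines.
Variables (L k : nat) (w : nat -> nat).
Hypothesis Hw : lines_ok L k w.

Lemma lines_ok_mono a b : a <= b <= k -> w a <= w b.
Proof.
case: Hw => _ [_ step] /andP[]; elim: b => [|b IH]; first by rewrite leqn0 => /eqP ->.
rewrite leq_eqVlt => /orP[/eqP -> //|ab] bk.
exact: leq_trans (IH ab (ltnW bk)) (step b bk).
Qed.

Lemma bands_separated i i' x y : i < i' -> i' < k ->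
  w i <= x < w i.+1 -> w i' <= y < w i'.+1 -> (w i.+1 <= x) = false /\ w i.+1 <= y.
Proof.
move=> ii' i'k Hx Hy.
have := lines_ok_mono (a := i.+1) (b := i'); rewrite ii' (ltnW i'k) => /(_ isT); lia.
Qed.

Lemma band_uniq i i' x : i < k -> i' < k ->
  w i <= x < w i.+1 -> w i' <= x < w i'.+1 -> i = i'.
Proof.
move=> ik i'k Hx Hx'; case: (ltngtP i i') => // [lt|lt].
- by case: (bands_separated lt i'k Hx Hx') => ->.
- by case: (bands_separated lt ik Hx' Hx) => ->.
Qed.

Lemma band_exists x : x < L -> exists2 i, i < k & w i <= x < w i.+1.
Proof.
case: Hw => w0 [wk _] xL.
suff /(_ k (leqnn k)) : forall j, j <= k -> x < w j -> exists2 i, i < j & w i <= x < w i.+1.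
  by rewrite wk => /(_ xL) [i ik Hi]; exists i.
elim=> [|j IH] jk xj; first by rewrite w0 in xj.
case: (ltnP x (w j)) => H; last by exists j; rewrite ?H.
by have [i ij Hi] := IH (ltnW jk) H; exists i => //; apply: ltnW.
Qed.

End Lines.

Section Gridding.
Variables (m n L : nat) (M : 'M[int]_(m, n)) (pi : 'S_L) (v h : nat -> nat).
Hypothesis Hg : is_gridding M pi v h.
Implicit Types (x y z : 'I_L) (i : 'I_m) (j : 'I_n).

Lemma col_uniq i i' (x : nat) : in_col v i x -> in_col v i' x -> i = i'.
Proof.
by case: Hg => Hv _ _ Hi Hi'; apply: val_inj; exact: (band_uniq Hv (ltn_ord i) (ltn_ord i') Hi Hi').
Qed.

Lemma row_uniq j j' (y : nat) : in_row h j y -> in_row h j' y -> j = j'.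
Proof.
by case: Hg => _ Hh _ Hj Hj'; apply: val_inj; exact: (band_uniq Hh (ltn_ord j) (ltn_ord j') Hj Hj').
Qed.

Lemma in_cell_uniq x i i' j j' :
  in_cell pi v h x i j -> in_cell pi v h x i' j' -> (i, j) = (i', j').
Proof. by move=> /andP[ci rj] /andP[ci' rj']; rewrite (col_uniq ci ci') (row_uniq rj rj'). Qed.

Lemma in_cell_neq0 x i j : in_cell pi v h x i j -> M i j != 0%R.
Proof. by move=> xij; apply/eqP => Mij; case: Hg => _ _ /(_ i j) [/(_ Mij x)]; rewrite xij. Qed.

Lemma in_cell_between x y z i j : in_cell pi v h x i j -> in_cell pi v h z i j ->
  between x y z -> between (pi x) (pi y) (pi z) -> in_cell pi v h y i j.
Proof.
move=> /andP[cx rx] /andP[cz rz] bx bpi.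
by rewrite /in_cell /in_col /in_row (between_band bx cx cz) (between_band bpi rx rz).
Qed.

Definition grid_cell (d : 'I_m * 'I_n) (x : 'I_L) : 'I_m * 'I_n :=
  odflt d [pick p : 'I_m * 'I_n | in_cell pi v h x p.1 p.2].

Lemma grid_cellP d x : in_cell pi v h x (grid_cell d x).1 (grid_cell d x).2.
Proof.
rewrite /grid_cell; case: pickP => [p //|none].
case: Hg => Hv Hh _.
have [i im Hi] := band_exists Hv (ltn_ord x).
have [j jn Hj] := band_exists Hh (ltn_ord (pi x)).
by have := none (Ordinal im, Ordinal jn); rewrite /in_cell /in_col /in_row /= Hi Hj.
Qed.

Lemma grid_cell_eq d x i j : in_cell pi v h x i j -> grid_cell d x = (i, j).
Proof.
by move=> xij; rewrite [grid_cell d x]surjective_pairing (in_cell_uniq (grid_cellP d x) xij).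
Qed.

Definition separates (t : 'I_m.+1 + 'I_n.+1) (x y : 'I_L) :=
  match t with
  | inl t => (v t <= x) != (v t <= y)
  | inr t => (h t <= pi x) != (h t <= pi y)
  end.

Lemma separating_line d x y : grid_cell d x != grid_cell d y -> exists t, separates t x y.
Proof.
case: Hg => Hv Hh _.
case/andP: (grid_cellP d x) (grid_cellP d y) => cx rx /andP[cy ry].
set p := grid_cell d x in cx rx *; set q := grid_cell d y in cy ry *.
rewrite [p]surjective_pairing [q]surjective_pairing xpair_eqE => /nandP[/eqP ne|/eqP ne].
- case: (ltngtP p.1 q.1) => [lt|lt|/val_inj //].
  + have [sx sy] := bands_separated Hv lt (ltn_ord _) cx cy.
    by exists (inl (@Ordinal m.+1 p.1.+1 (ltn_ord p.1))); rewrite /= sx sy.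
  + have [sx sy] := bands_separated Hv lt (ltn_ord _) cy cx.
    by exists (inl (@Ordinal m.+1 q.1.+1 (ltn_ord q.1))); rewrite /= sx sy.
- case: (ltngtP p.2 q.2) => [lt|lt|/val_inj //].
  + have [sx sy] := bands_separated Hh lt (ltn_ord _) rx ry.
    by exists (inr (@Ordinal n.+1 p.2.+1 (ltn_ord p.2))); rewrite /= sx sy.
  + have [sx sy] := bands_separated Hh lt (ltn_ord _) ry rx.
    by exists (inr (@Ordinal n.+1 q.2.+1 (ltn_ord q.2))); rewrite /= sx sy.
Qed.

Hypothesis HG : gridding_matrix M.

Lemma in_cell_ltn x y i j : in_cell pi v h x i j -> in_cell pi v h y i j ->
  (x < y) = oriented (M i j) (pi x) (pi y).
Proof.
move=> xij yij; have := HG i j; rewrite !inE (negbTE (in_cell_neq0 xij)) /=.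
case: Hg => _ _ /(_ i j) [_ inc dec].
rewrite /oriented; case/orP => /eqP Mij; rewrite Mij //=.
- case: ltngtP => [lt|lt|/val_inj->]; last by rewrite ltnn.
  + by rewrite inc.
  + by have := inc Mij _ _ yij xij lt; lia.
- case: ltngtP => [lt|lt|/val_inj->]; last by rewrite ltnn.
  + by rewrite dec.
  + by have := dec Mij _ _ yij xij lt; lia.
Qed.

Lemma between_in_cell x y z i j :
  in_cell pi v h x i j -> in_cell pi v h y i j -> in_cell pi v h z i j ->
  between x y z = between (pi x) (pi y) (pi z).
Proof.
move=> xij yij zij; rewrite /between (in_cell_ltn xij yij) (in_cell_ltn yij zij).
rewrite (in_cell_ltn zij yij) (in_cell_ltn yij xij) /oriented.
by case: ifP => // _; rewrite orbC; congr orb; apply: andbC.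
Qed.

Lemma pmm_oriented c r x y i j : pmm_signs M c r ->
  in_cell pi v h x i j -> in_cell pi v h y i j ->
  oriented (c i) x y = oriented (r j) (pi x) (pi y).
Proof.
case=> ci rj Mcr xij yij; have Mij := Mcr i j (in_cell_neq0 xij).
rewrite /oriented (in_cell_ltn xij yij) (in_cell_ltn yij xij) Mij /oriented.
by case: (ci i) (rj j) => -> [] ->.
Qed.

End Gridding.

(** * The row-column graph *)

Lemma path_map_iota (T : Type) (e : rel T) (f : nat -> T) a g :
  (forall i, e (f i) (f i.+1)) -> path e (f a) (rcons [seq f i | i <- iota a.+1 g] (f (a + g).+1)).
Proof.
move=> adj; elim: g a => [|g IH] a /=; first by rewrite addn0 adj.
by rewrite adj -addSnnS IH.
Qed.

Lemma cycle_map_iota (T : Type) (e : rel T) (f : nat -> T) a g : 0 < g ->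
  (forall i, e (f i) (f i.+1)) -> f (a + g) = f a -> path.cycle e [seq f i | i <- iota a g].
Proof. by case: g => [//|g] _ adj per; rewrite /= -{2}per addnS; apply: path_map_iota. Qed.

Lemma not_uniq_map_iota (T : eqType) (f : nat -> T) a g :
  ~~ uniq [seq f k | k <- iota a g] -> exists b g', [/\ 0 < g', g' < g & f (b + g') = f b].
Proof.
move=> /(uniqPn (f 0))[i [j [ij]]]; rewrite size_map size_iota => jg.
rewrite !(nth_map 0) ?size_iota ?(ltn_trans ij) // !nth_iota ?(ltn_trans ij) // => Eij.
exists (a + i), (j - i); rewrite subn_gt0 -addnA (subnKC (ltnW ij)) Eij.
by split=> //; apply: leq_ltn_trans (leq_subr i j) jg.
Qed.

Lemma next_next_neq (T : eqType) (s : seq T) x :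
  uniq s -> 2 < size s -> x \in s -> next s (next s x) != x.
Proof.
move=> Us s3 /rot_to[i s' Es]; rewrite -!(next_rot i Us) Es.
have : uniq (x :: s') by rewrite -Es rot_uniq.
have : 2 < size (x :: s') by rewrite -Es size_rot.
case: s' {Es} => [|y [|z s']] //= _ /and3P[]; rewrite !inE !negb_or.
move=> /and3P[xy xz _] /andP[yz _] _.
by rewrite eqxx (eq_sym y) (negbTE xy) eqxx eq_sym.
Qed.

Lemma three_in_pair (T : eqType) (a b x y z : T) :
  x \in [:: a; b] -> y \in [:: a; b] -> z \in [:: a; b] -> [|| x == y, x == z | y == z].
Proof. by rewrite !inE => /orP[]/eqP-> /orP[]/eqP-> /orP[]/eqP->; rewrite !eqxx ?orbT. Qed.

Section RowColumnGraph.
Variables (m n : nat) (M : 'M[int]_(m, n)).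
Implicit Types (s : seq ('I_m + 'I_n)) (i : 'I_m) (j : 'I_n) (p q o : 'I_m * 'I_n).

Definition edge_cell (d : 'I_m * 'I_n) (x y : 'I_m + 'I_n) : 'I_m * 'I_n :=
  match x, y with
  | inl i, inr j | inr j, inl i => (i, j)
  | _, _ => d
  end.

Definition same_col (p q : 'I_m * 'I_n) := p.1 == q.1.

Definition rook_step (p q : 'I_m * 'I_n) := (p != q) && (same_col p q || (p.2 == q.2)).

Lemma same_colC p q : same_col p q = same_col q p.
Proof. exact: eq_sym. Qed.

Lemma rook_stepC p q : rook_step p q = rook_step q p.
Proof. by rewrite /rook_step same_colC eq_sym [q.2 == _]eq_sym. Qed.

Lemma rook_step_col p q : rook_step p q -> same_col p q -> p.2 != q.2.
Proof.
case/andP=> pq _ /eqP e1; apply/eqP => e2.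
by move: pq; rewrite (injective_projections p q e1 e2) eqxx.
Qed.

Lemma rook_step_row p q : rook_step p q -> ~~ same_col p q -> p.2 = q.2.
Proof. by case/andP=> _ /orP[-> | /eqP]. Qed.

Lemma rc_adj_irr x : rc_adj M x x = false.
Proof. by case: x. Qed.

Lemma edge_cell_inj d x y x' y' : rc_adj M x y -> rc_adj M x' y' ->
  edge_cell d x y = edge_cell d x' y' -> (x = x' /\ y = y') \/ (x = y' /\ y = x').
Proof.
by case: x => a; case: y => b //; case: x' => a'; case: y' => b' //= _ _ [-> ->];
  [left|right|right|left].
Qed.

Lemma cycle_cellsE d s : uniq s -> path.cycle (rc_adj M) s ->
  cycle_cells s = [set edge_cell d x (next s x) | x in s].
Proof.
move=> Us cyc; apply/setP => p; apply/idP/imsetP.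
- rewrite inE => /orP[/andP[xs /eqP E]|/andP[ys /eqP E]].
  + by exists (inl p.1); rewrite // E /= -surjective_pairing.
  + by exists (inr p.2); rewrite // E /= -surjective_pairing.
- move=> [x xs ->]; have := next_cycle cyc xs; rewrite inE.
  by case: x xs => [i|j] xs; case E: (next s _) => [i'|j'] //= _; rewrite xs E eqxx ?orbT.
Qed.

Lemma card_cycle_cells s : uniq s -> 2 < size s -> path.cycle (rc_adj M) s ->
  #|cycle_cells s| = size s.
Proof.
move=> Us s3 cyc.
have [x0 x0s] : exists x, x \in s by case: s s3 {Us cyc} => // x s _; exists x; rewrite mem_head.
have [d _] : exists d : 'I_m * 'I_n, true.
  move: (next_cycle cyc x0s); case: (next s x0) => [i'|j']; by case: x0 {x0s} => [i|j].
rewrite (cycle_cellsE d Us cyc) card_in_imset; first exact/card_uniqP.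
move=> x y xs ys E.
have [[//]|[xE yE]] := edge_cell_inj (next_cycle cyc xs) (next_cycle cyc ys) E.
by have := next_next_neq Us s3 xs; rewrite yE -xE eqxx.
Qed.

Lemma cycle_cells_col s i j : uniq s -> (i, j) \in cycle_cells s ->
  inr j \in [:: next s (inl i); prev s (inl i)].
Proof.
move=> Us; rewrite !inE /= => /orP[/andP[_ /eqP ->]|/andP[_ /eqP <-]].
  by rewrite eqxx.
by rewrite (prev_next Us) eqxx orbT.
Qed.

Lemma cycle_cells_row s i j : uniq s -> (i, j) \in cycle_cells s ->
  inl i \in [:: next s (inr j); prev s (inr j)].
Proof.
move=> Us; rewrite !inE /= => /orP[/andP[_ /eqP <-]|/andP[_ /eqP ->]].
  by rewrite (prev_next Us) eqxx orbT.
by rewrite eqxx.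
Qed.

Lemma cycle_rook_turn s p q o : uniq s ->
  p \in cycle_cells s -> q \in cycle_cells s -> o \in cycle_cells s ->
  rook_step p q -> rook_step q o -> p != o -> same_col p q = ~~ same_col q o.
Proof.
move=> Us; case: p q o => [a b] [a' b'] [a'' b''] pC qC oC.
rewrite /rook_step /same_col !xpair_eqE /=.
case: (eqVneq a a') pC => [-> | na] pC; case: (eqVneq a' a'') oC => [<- | na'] oC //=.
- rewrite !andbT => bb' b'b'' bb''.
  have := three_in_pair (cycle_cells_col Us pC) (cycle_cells_col Us qC) (cycle_cells_col Us oC).
  by rewrite !(inj_eq (@inr_inj _ _)) (negbTE bb') (negbTE bb'') (negbTE b'b'').
- move=> /eqP bb' /eqP b'b''; subst b' b''; rewrite eqxx andbT => naa''.
  have := three_in_pair (cycle_cells_row Us pC) (cycle_cells_row Us qC) (cycle_cells_row Us oC).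
  by rewrite !(inj_eq (@inl_inj _ _)) (negbTE na) (negbTE naa'') (negbTE na').
Qed.

Section UniqueCycle.
Variable C : {set 'I_m * 'I_n}.
Hypothesis HU : unicyclic_with M C.

Lemma two_lt_card_cycle : 2 < #|C|.
Proof. by case: HU => -[s [Us s3 cyc ->]] _; rewrite card_cycle_cells. Qed.

Section Walk.
Variable w : nat -> 'I_m + 'I_n.
Hypotheses (w_adj : forall d, rc_adj M (w d) (w d.+1)) (w_nonback : forall d, w d != w d.+2).

Lemma closed_walk_gt2 a g : 0 < g -> w (a + g) = w a -> 2 < g.
Proof.
case: g => [|[|[|g]]] // _; first by rewrite addn1 => E; have := w_adj a; rewrite E rc_adj_irr.
by rewrite addn2 => E; have := w_nonback a; rewrite E eqxx.
Qed.

Lemma closed_walk_long a g : 0 < g -> w (a + g) = w a -> #|C| <= g.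
Proof.
elim/ltn_ind: g a => g IH a g0 per.
set T := [seq w k | k <- iota a g].
have [U | /not_uniq_map_iota[b [g' [g'0 g'g per']]]] := boolP (uniq T).
  have g2 := closed_walk_gt2 g0 per.
  have cyc : path.cycle (rc_adj M) T := cycle_map_iota g0 w_adj per.
  have cT : is_cycle_of M (cycle_cells T) by exists T; rewrite size_map size_iota.
  by rewrite -(proj2 HU _ cT) card_cycle_cells // size_map size_iota.
exact: leq_trans (IH g' g'g b g'0 per') (ltnW g'g).
Qed.

Lemma periodic_walk_in_cycle d0 : (forall d, w (d + #|C|) = w d) ->
  forall d, edge_cell d0 (w d) (w d.+1) \in C.
Proof.
move=> per d; have l2 := two_lt_card_cycle.
set T := [seq w k | k <- iota d #|C|].
have U : uniq T.
  apply: contraT => /not_uniq_map_iota[b [g [g0 gl per']]].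
  by have := closed_walk_long g0 per'; rewrite leqNgt gl.
have cyc : path.cycle (rc_adj M) T := cycle_map_iota (ltnW (ltnW l2)) w_adj (per d).
have cT : is_cycle_of M (cycle_cells T) by exists T; rewrite size_map size_iota.
have ET : T = w d :: w d.+1 :: [seq w k | k <- iota d.+2 (#|C| - 2)].
  by rewrite /T -{1}(subnKC (ltnW l2)) add2n.
rewrite -(proj2 HU _ cT) (cycle_cellsE d0 U cyc); apply/imsetP; exists (w d).
  by rewrite ET mem_head.
by rewrite ET /= eqxx.
Qed.

End Walk.

Lemma periodic_rook_walk_in_cycle (N : nat -> 'I_m * 'I_n) :
  (forall d, N (d + #|C|) = N d) -> (forall d, M (N d).1 (N d).2 != 0%R) ->
  (forall d, rook_step (N d) (N d.+1)) ->
  (forall d, same_col (N d) (N d.+1) = ~~ same_col (N d.+1) (N d.+2)) ->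
  forall d, N d \in C.
Proof.
move=> per nz step turn.
pose w d := if same_col (N d) (N d.+1) then inl (N d).1 else inr (N d).2 : 'I_m + 'I_n.
have shared d : w d = if same_col (N d) (N d.+1) then inl (N d.+1).1 else inr (N d.+1).2.
  by rewrite /w; case: ifP => [/eqP -> // | nc]; rewrite (rook_step_row (step d)) ?nc.
have edge d : edge_cell (N 0) (w d) (w d.+1) = N d.+1.
  by rewrite shared /w (turn d); case: (same_col _ _); rewrite /= -surjective_pairing.
have adj d : rc_adj M (w d) (w d.+1).
  by rewrite shared /w (turn d); case: (same_col _ _); apply: nz.
have nonback d : w d != w d.+2.
  rewrite shared /w (turn d) -[same_col (N d.+2) _]negbK -(turn d.+1).
  case: ifP => [nsc | /negbFE sc]; rewrite (inj_eq (@inl_inj _ _), inj_eq (@inr_inj _ _)).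
  - exact: nsc.
  - exact: rook_step_col (step d.+1) sc.
have wper d : w (d + #|C|) = w d by rewrite /w -addSn !per.
move=> k; rewrite -(per k) -(prednK (ltnW (ltnW two_lt_card_cycle))) addnS -edge.
exact: periodic_walk_in_cycle adj nonback _ wper _.
Qed.

End UniqueCycle.
End RowColumnGraph.

(** * Coils *)

Section Coil.
Variables (m n : nat) (M : 'M[int]_(m, n)) (c : 'I_m -> int) (r : 'I_n -> int).
Variable C : {set 'I_m * 'I_n}.
Hypotheses (HG : gridding_matrix M) (HP : pmm_signs M c r) (HU : unicyclic_with M C).
Variables (L : nat) (pi : 'S_L) (v0 h0 : nat -> nat).
Hypothesis Hg0 : is_gridding M pi v0 h0.
Local Notation l := #|C|.
Hypothesis HlL : l < L.
Variables (s : 'I_L -> 'I_L) (e : 'I_l -> 'I_m * 'I_n).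
Hypotheses (He : injective e) (HeC : forall t, e t \in C).
Hypothesis HC1 : forall (k : 'I_L) (t : 'I_l), t = k %% l :> nat ->
  in_cell pi v0 h0 (s k) (e t).1 (e t).2.
Hypothesis HC2 : forall k k' : 'I_L, k' = k.+1 :> nat -> orient_arrow c r pi v0 h0 (s k) (s k').
Hypothesis HC3 : forall k k' : 'I_L, l.+1 <= k -> k' = k - l.+1 :> nat ->
  orient_arrow c r pi v0 h0 (s k) (s k').

Let l_gt2 : 2 < l := two_lt_card_cycle HU.
Let l_gt0 : 0 < l := ltnW (ltnW l_gt2).
Let s0 : 'I_L := Ordinal (leq_ltn_trans (leq0n l) HlL).

(* [coil_pt k] is the point v_(k+1) of the coil ordering (junk for k >= L) and
   [coil_cell k] its cell in the coil gridding, the one labelled (k mod l) + 1. *)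
Definition coil_pt k := s (insubd s0 k).

Definition coil_cell q := e (Ordinal (ltn_pmod q l_gt0)).

Lemma coil_pt_val (k : 'I_L) : coil_pt k = s k.
Proof. by rewrite /coil_pt valKd. Qed.

Lemma coil_pt_cell k : k < L ->
  in_cell pi v0 h0 (coil_pt k) (coil_cell k).1 (coil_cell k).2.
Proof. by move=> kL; apply: HC1; rewrite /= val_insubd kL. Qed.

Lemma coil_arrow k : k.+1 < L -> orient_arrow c r pi v0 h0 (coil_pt k) (coil_pt k.+1).
Proof. by move=> kL; apply: HC2; rewrite !val_insubd kL (ltnW kL). Qed.

Lemma coil_arrow_back k : l <= k -> k.+1 < L ->
  orient_arrow c r pi v0 h0 (coil_pt k.+1) (coil_pt (k - l)).
Proof.
move=> lk kL; have klL : k - l < L := leq_ltn_trans (leq_subr l k) (ltnW kL).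
by apply: HC3; rewrite !val_insubd kL // klL subSS.
Qed.

Lemma coil_cell_mod q q' : q = q' %[mod l] -> coil_cell q = coil_cell q'.
Proof. by move=> E; rewrite /coil_cell; congr e; apply: val_inj. Qed.

Lemma coil_pt_cell_back k : l <= k -> k < L ->
  in_cell pi v0 h0 (coil_pt (k - l)) (coil_cell k).1 (coil_cell k).2.
Proof.
move=> lk kL; rewrite -(@coil_cell_mod (k - l)); last by rewrite -{2}(subnK lk) modnDr.
exact: coil_pt_cell (leq_ltn_trans (leq_subr l k) kL).
Qed.

Lemma coil_cell_neq q k : 0 < k < l -> coil_cell q != coil_cell (q + k).
Proof.
case/andP=> k_gt0 kl; apply/eqP => /He/(congr1 val) /= /eqP.
by rewrite eq_sym eqn_mod_dvd ?leq_addr // addKn => /(dvdn_leq k_gt0); rewrite leqNgt kl.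
Qed.

Lemma arrow_cases x y (p q : 'I_m * 'I_n) : orient_arrow c r pi v0 h0 x y ->
  in_cell pi v0 h0 x p.1 p.2 -> in_cell pi v0 h0 y q.1 q.2 ->
  (p.1 = q.1 /\ oriented (c p.1) x y) \/ (p.2 = q.2 /\ oriented (r p.2) (pi x) (pi y)).
Proof.
case/orP=> [/existsP[i /and3P[xi yi o]] | /existsP[j /and3P[xj yj o]]].
  by move=> /andP[xp _] /andP[yq _]; left; rewrite -(col_uniq Hg0 xi xp) -(col_uniq Hg0 yi yq).
by move=> /andP[_ xp] /andP[_ yq]; right; rewrite -(row_uniq Hg0 xj xp) -(row_uniq Hg0 yj yq).
Qed.

Lemma coil_cell_rook_step q : rook_step (coil_cell q) (coil_cell q.+1).
Proof.
rewrite /rook_step -[q.+1]addn1 (@coil_cell_neq q 1 (ltnW l_gt2)) /= addn1.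
have kL : (q %% l).+1 < L := leq_ltn_trans (ltn_pmod q l_gt0) HlL.
have Ek : coil_cell (q %% l) = coil_cell q by apply: coil_cell_mod; rewrite modn_mod.
have Ek1 : coil_cell (q %% l).+1 = coil_cell q.+1.
  by apply: coil_cell_mod; rewrite -addn1 -[q.+1]addn1 modnDml.
have := arrow_cases (coil_arrow kL) (coil_pt_cell (ltnW kL)) (coil_pt_cell kL).
by rewrite Ek Ek1 /same_col => -[[-> _] | [-> _]]; rewrite eqxx ?orbT.
Qed.

Lemma coil_cell_turn q :
  same_col (coil_cell q) (coil_cell q.+1) = ~~ same_col (coil_cell q.+1) (coil_cell q.+2).
Proof.
case: HU => -[sC [UsC _ _ EC]] _.
apply: (cycle_rook_turn UsC); rewrite -?EC ?HeC ?coil_cell_rook_step //.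
by rewrite -[q.+2]addn2 (@coil_cell_neq q 2 l_gt2).
Qed.

Lemma arrow_oriented x y (p q : 'I_m * 'I_n) : orient_arrow c r pi v0 h0 x y ->
  in_cell pi v0 h0 x p.1 p.2 -> in_cell pi v0 h0 y q.1 q.2 -> rook_step p q ->
  if same_col p q then oriented (c p.1) x y else oriented (r p.2) (pi x) (pi y).
Proof.
move=> xy xp yq pq.
case: (arrow_cases xy xp yq) => [[pq1 o] | [pq2 o]]; case: ifP => // pqc.
- by rewrite /same_col pq1 eqxx in pqc.
- by have := rook_step_col pq pqc; rewrite pq2 eqxx.
Qed.

Lemma coil_detour i : l <= i -> i.+1 < L ->
  if same_col (coil_cell i) (coil_cell i.+1)
  then oriented (c (coil_cell i).1) (coil_pt i) (coil_pt i.+1) /\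
       oriented (c (coil_cell i).1) (coil_pt i.+1) (coil_pt (i - l))
  else oriented (r (coil_cell i).2) (pi (coil_pt i)) (pi (coil_pt i.+1)) /\
       oriented (r (coil_cell i).2) (pi (coil_pt i.+1)) (pi (coil_pt (i - l))).
Proof.
move=> li iL; have st := coil_cell_rook_step i.
have o1 := arrow_oriented (coil_arrow iL) (coil_pt_cell (ltnW iL)) (coil_pt_cell iL) st.
have st' : rook_step (coil_cell i.+1) (coil_cell i) by rewrite rook_stepC.
have o2 := arrow_oriented (coil_arrow_back li iL) (coil_pt_cell iL)
  (coil_pt_cell_back li (ltnW iL)) st'.
move: o1 o2; rewrite [same_col (coil_cell i.+1) _]same_colC.
by case: ifP => [/eqP -> | nc]; last rewrite (rook_step_row st (negbT nc)); split.
Qed.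

Lemma coil_period_oriented i : l <= i -> i.+1 < L ->
  oriented (c (coil_cell i).1) (coil_pt i) (coil_pt (i - l)) /\
  oriented (r (coil_cell i).2) (pi (coil_pt i)) (pi (coil_pt (i - l))).
Proof.
move=> li iL.
have Eo := pmm_oriented Hg0 HG HP (coil_pt_cell (ltnW iL)) (coil_pt_cell_back li (ltnW iL)).
have := coil_detour li iL; case: ifP => _ [o1 o2]; have o := oriented_trans o1 o2.
- by rewrite -Eo.
- by rewrite Eo.
Qed.

Variables (v h : nat -> nat).
Hypothesis Hg : is_gridding M pi v h.

Local Notation cell := (grid_cell pi v h (coil_cell 0)).

Lemma grid_cell_rook_step i : l <= i -> i.+1 < L ->
  cell (coil_pt i) = cell (coil_pt (i - l)) ->
  rook_step (cell (coil_pt i)) (cell (coil_pt i.+1)) /\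
  same_col (cell (coil_pt i)) (cell (coil_pt i.+1)) = same_col (coil_cell i) (coil_cell i.+1).
Proof.
move=> li iL same.
have zp := grid_cellP Hg (coil_cell 0) (coil_pt (i - l)); rewrite -same in zp.
have xp := grid_cellP Hg (coil_cell 0) (coil_pt i).
set x := coil_pt i in xp zp *; set y := coil_pt i.+1; set z := coil_pt (i - l) in zp *.
have btw : if same_col (coil_cell i) (coil_cell i.+1)
    then between x y z else between (pi x) (pi y) (pi z).
  by have := coil_detour li iL; case: ifP => _ [o1 o2]; apply: oriented_between o1 o2.
have pq : cell x != cell y.
  apply/eqP => py; have yp := grid_cellP Hg (coil_cell 0) y; rewrite -py in yp.
  have Eb := between_in_cell Hg HG xp yp zp.
  have bpi : between (pi x) (pi y) (pi z) by move: btw; rewrite Eb; case: ifP.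
  have bx : between x y z by rewrite Eb.
  have := in_cell_between (coil_pt_cell (ltnW iL)) (coil_pt_cell_back li (ltnW iL)) bx bpi.
  move/(in_cell_uniq Hg0 (coil_pt_cell iL)); rewrite -!surjective_pairing => E.
  by case/andP: (coil_cell_rook_step i); rewrite E eqxx.
case/andP: xp zp btw (grid_cellP Hg (coil_cell 0) y) => xp1 xp2 /andP[zp1 zp2].
case: ifP => sc b /andP[yq1 yq2].
- have E1 : (cell y).1 = (cell x).1 := col_uniq Hg yq1 (between_band b xp1 zp1).
  by rewrite /rook_step pq /same_col E1 eqxx.
- have E2 : (cell y).2 = (cell x).2 := row_uniq Hg yq2 (between_band b xp2 zp2).
  have st : rook_step (cell x) (cell y) by rewrite /rook_step pq E2 eqxx orbT.
  split=> //; apply/negbTE/negP => /(rook_step_col st); by rewrite E2 eqxx.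
Qed.

Lemma grid_cell_in_cycle k : l <= k -> k + l.+1 < L ->
  (forall d, d <= l -> cell (coil_pt (k + d)) = cell (coil_pt (k + d - l))) ->
  cell (coil_pt k) \in C.
Proof.
move=> lk kL same.
pose W d := cell (coil_pt (k + d %% l)).
have step d : rook_step (W d) (W d.+1) /\
    same_col (W d) (W d.+1) = same_col (coil_cell (k + d)) (coil_cell (k + d).+1).
  have dl := ltn_pmod d l_gt0.
  have -> : W d.+1 = cell (coil_pt (k + d %% l).+1).
    rewrite /W -addn1 -modnDml; have [lt | eq] : d %% l + 1 < l \/ d %% l + 1 = l by lia.
      by rewrite modn_small // addn1 addnS.
    by rewrite eq modnn addn0 -addn1 -addnA eq (same l (leqnn l)) addnK.
  have iL : (k + d %% l).+1 < L by lia.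
  have [st sc] := grid_cell_rook_step (leq_trans lk (leq_addr _ _)) iL (same _ (ltnW dl)).
  split=> //; rewrite sc; congr same_col; apply: coil_cell_mod; first by rewrite modnDmr.
  by rewrite -!addSn modnDmr.
have := periodic_rook_walk_in_cycle HU (N := W) _ _ (fun d => (step d).1) _ 0.
rewrite /W mod0n addn0; apply=> d.
- by rewrite /W modnDr.
- exact: (in_cell_neq0 Hg (grid_cellP Hg _ _)).
- by rewrite (step d).2 (step d.+1).2 addnS coil_cell_turn.
Qed.

Definition period_break i :=
  [&& l <= i, i.+1 < L & cell (coil_pt i) != cell (coil_pt (i - l))].

Definition break_key i : 'I_l * ('I_m.+1 + 'I_n.+1) :=
  (Ordinal (ltn_pmod i l_gt0),
   odflt (inl ord0) [pick t | separates pi v h t (coil_pt i) (coil_pt (i - l))]).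

Lemma break_key_separates i : period_break i ->
  separates pi v h (break_key i).2 (coil_pt i) (coil_pt (i - l)).
Proof.
case/and3P=> _ _ /(separating_line Hg)[t st]; rewrite /break_key /=.
by case: pickP => [// | /(_ t)]; rewrite st.
Qed.

Lemma break_key_lt i1 i2 : period_break i1 -> period_break i2 ->
  break_key i1 = break_key i2 -> i1 < i2 -> False.
Proof.
move=> b1 b2 E lt; have md : i1 = i2 %[mod l] := congr1 (fun k => val k.1) E.
have sep1 := break_key_separates b1; have sep2 := break_key_separates b2.
rewrite E in sep1; case/and3P: b1 b2 => li1 _ _ /and3P[_ i2L _].
have step j : l <= j <= i2 -> j = i1 %[mod l] ->
    oriented (c (coil_cell i1).1) (coil_pt j) (coil_pt (j - l)) /\
    oriented (r (coil_cell i1).2) (pi (coil_pt j)) (pi (coil_pt (j - l))).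
  case/andP=> lj ji2 jmd; rewrite -(coil_cell_mod jmd).
  exact: coil_period_oriented lj (leq_ltn_trans (ji2 : j.+1 <= i2.+1) i2L).
have li12 : l <= i1 < i2 by rewrite li1.
move: sep1 sep2; case: (break_key i2).2 => t /= sep1 sep2.
- have col_step j jr jm := (step j jr jm).1.
  exact: (oriented_class_crosses_once (f := fun j => coil_pt j) col_step li12 md sep1 sep2).
- have row_step j jr jm := (step j jr jm).2.
  exact: (oriented_class_crosses_once (f := fun j => pi (coil_pt j)) row_step li12 md sep1 sep2).
Qed.

Lemma break_key_inj i1 i2 : period_break i1 -> period_break i2 ->
  break_key i1 = break_key i2 -> i1 = i2.
Proof.
move=> b1 b2 E; case: (ltngtP i1 i2) => // lt.
- by case: (break_key_lt b1 b2 E lt).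
- by case: (break_key_lt b2 b1 (esym E) lt).
Qed.

Lemma misplaced_near_break (k : 'I_L) : misplaced pi v h C (coil_pt k) ->
  [|| k < l, L <= k + l.+1 | [exists d : 'I_l.+1, period_break (k + d)]].
Proof.
case/existsP=> i /existsP[j /andP[kij ijC]].
apply/negPn/negP; rewrite !negb_or -leqNgt -ltnNge => /and3P[lk kL /existsPn nobreak].
suff : cell (coil_pt k) \in C by rewrite (grid_cell_eq Hg _ kij) (negbTE ijC).
apply: (grid_cell_in_cycle lk kL) => d dl; apply/eqP.
have := nobreak (Ordinal (dl : d < l.+1)); rewrite /period_break /=.
have kdL : (k + d).+1 < L by lia.
by rewrite (leq_trans lk (leq_addr _ _)) kdL /= negbK.
Qed.

Lemma card_near_breaks :
  #|[set k : 'I_L | [exists d : 'I_l.+1, period_break (k + d)]]| <= l.+1 * (l * (m.+1 + n.+1)).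
Proof.
have -> : l.+1 * (l * (m.+1 + n.+1)) = #|{: 'I_l.+1 * ('I_l * ('I_m.+1 + 'I_n.+1))}|.
  by rewrite !card_prod card_sum !card_ord.
pose d_of (k : 'I_L) := odflt ord0 [pick d : 'I_l.+1 | period_break (k + d)].
have d_ofP (k : 'I_L) : [exists d : 'I_l.+1, period_break (k + d)] -> period_break (k + d_of k).
  by case/existsP=> d bd; rewrite /d_of; case: pickP => // /(_ d); rewrite bd.
apply: (@leq_card_in _ _ (fun k => (d_of k, break_key (k + d_of k)))) => k1 k2.
rewrite !inE => /d_ofP b1 /d_ofP b2 E; have /= E1 := congr1 fst E.
have /= E2 := congr1 snd E; rewrite -E1 in b2 E2.
by move/eqP: (break_key_inj b1 b2 E2); rewrite eqn_add2r => /eqP/val_inj.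
Qed.

Hypothesis Hs : injective s.

Lemma num_misplaced_le : num_misplaced pi v h C <= l + l.+1 + l.+1 * (l * (m.+1 + n.+1)).
Proof.
rewrite /num_misplaced -(card_preimset _ Hs).
set near := [set k : 'I_L | [exists d : 'I_l.+1, period_break (k + d)]].
have sub : s @^-1: [set x | misplaced pi v h C x] \subset
    [set k : 'I_L | 0 <= k < l] :|: [set k : 'I_L | L - l.+1 <= k < L] :|: near.
  apply/subsetP => k; rewrite !inE -coil_pt_val => /misplaced_near_break /or3P[-> // | kl | ->].
    have -> : L - l.+1 <= k by lia.
    by rewrite ltn_ord orbT.
  by rewrite !orbT.
apply: leq_trans (subset_leq_card sub) _.
apply: leq_trans (leq_card_setU _ _) (leq_add _ card_near_breaks).
apply: leq_trans (leq_card_setU _ _) (leq_add _ _).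
  by rewrite (leq_trans (card_ord_range _ _ _)) ?subn0.
by rewrite (leq_trans (card_ord_range _ _ _)) // subKn.
Qed.

End Coil.

Theorem lemma5p6 (m n : nat) (M : 'M[int]_(m, n)) (c : 'I_m -> int) (r : 'I_n -> int)
    (C : {set 'I_m * 'I_n}) :
  gridding_matrix M -> pmm_signs M c r -> unicyclic_with M C ->
  exists B : nat, forall (L : nat) (pi : 'S_L), coil M c r C pi ->
    forall v h : nat -> nat, is_gridding M pi v h -> (num_misplaced pi v h C <= B)%N.
Proof.
move=> HG HP HU; exists (#|C| + #|C|.+1 + #|C|.+1 * (#|C| * (m.+1 + n.+1))).
move=> L pi [v0 [h0 [Hg0 lL [s [e [[Hs He HeC] [HC1 HC2 HC3 _]]]]]]] v h Hg.
exact: (num_misplaced_le HG HP HU Hg0 lL He HeC HC1 HC2 HC3 Hg Hs).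
Qed.
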